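(* There exists a three-dimensional complex solvmanifold $M=\Gamma\backslash G$ of type (3b) whose underlying compact smooth $6$-manifold carries a continuous family of complex structures (small deformations of the complex structure of $M$) that are not left-invariant, i.e. none of them is induced on $\Gamma\backslash G$ by a left-invariant complex structure on the real Lie group $G$.
   Context: A complex solvmanifold is a compact manifold $\Gamma\backslash G$ with $G$ a simply connected complex solvable Lie group and $\Gamma$ a lattice, with complex structure induced from $G$. Type (3) means $G=\mathbf{C}^2\rtimes\mathbf{C}$ with action $\phi(x)(y,z)=(e^{x}y,e^{-x}z)$; every lattice of such $G$ has the form $\Gamma=\Delta\rtimes\Lambda$ with $\Delta$ a lattice of $\mathbf{C}^2$ and $\Lambda$ a lattice of $\mathbf{C}$ generated over $\mathbf{Z}$ by $\lambda,\mu$. Type (3b) means additionally that $e^{\lambda}\in\mathbf{R}$ and $e^{\mu}\in\mathbf{R}$. A complex structure on $\Gamma\backslash G$ is called left-invariant if it is the quotient of a left-invariant (integrable) complex structure on the real Lie group $G$ (left-invariance implies it descends to $\Gamma\backslash G$). *)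

From HB Require Import structures.
From mathcomp Require Import all_boot all_order all_algebra.
From mathcomp Require Import all_classical all_reals all_analysis.
Set Implicit Arguments. Unset Strict Implicit. Unset Printing Implicit Defensive.
Import Order.TTheory GRing.Theory Num.Theory.
Import numFieldNormedType.Exports.
Local Open Scope ring_scope.

Section Solv.
Variable R : realType.

(* Points of G = C^3 in real coordinates
   (Re x, Im x, Re y, Im y, Re z, Im z), indices 0..5. *)
Definition pt := 'rV[R]_6.
Definition co (g : pt) (k : nat) : R := g ord0 (inord k).

Definition cexp (a b : R) : R * R := (expR a * cos b, expR a * sin b).

(* group law of G = C^2 ⋊_phi C, phi(x)(y,z) = (e^x y, e^{-x} z):
   (x,y,z)(x',y',z') = (x + x', y + e^x y', z + e^{-x} z') *)
Definition gmul (g h : pt) : pt :=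
  let E := cexp (co g 0) (co g 1) in
  let F := cexp (- co g 0) (- co g 1) in
  \row_(k < 6) nth 0
    [:: co g 0 + co h 0; co g 1 + co h 1;
        co g 2 + (E.1 * co h 2 - E.2 * co h 3);
        co g 3 + (E.1 * co h 3 + E.2 * co h 2);
        co g 4 + (F.1 * co h 4 - F.2 * co h 5);
        co g 5 + (F.1 * co h 5 + F.2 * co h 4)] k.

(* action phi(a1 + i a2) on C^2 = R^4 (coordinates Re y, Im y, Re z, Im z) *)
Definition phi4 (a1 a2 : R) (w : 'rV[R]_4) : 'rV[R]_4 :=
  let E := cexp a1 a2 in
  let F := cexp (- a1) (- a2) in
  let c k := w ord0 (inord k) in
  \row_(k < 4) nth 0
    [:: E.1 * c 0 - E.2 * c 1; E.1 * c 1 + E.2 * c 0;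
        F.1 * c 2 - F.2 * c 3; F.1 * c 3 + F.2 * c 2] k.

(* Lattice data: Λ = Z λ + Z μ ⊂ C (λ = l1 + i l2, μ = m1 + i m2), and
   Δ = Z^4 B ⊂ C^2 = R^4 (rows of the invertible matrix B), stable under
   phi(λ) and phi(μ). *)
Definition inLambda (l1 l2 m1 m2 a b : R) : Prop :=
  exists p q : int, a = p%:~R * l1 + q%:~R * m1 /\ b = p%:~R * l2 + q%:~R * m2.
Definition inDelta (B : 'M[R]_4) (w : 'rV[R]_4) : Prop :=
  exists n : 'rV[int]_4, w = map_mx intr n *m B.

Definition lattice_data (l1 l2 m1 m2 : R) (B : 'M[R]_4) : Prop :=
  [/\ l1 * m2 - l2 * m1 != 0, B \in unitmx &
      forall w, inDelta B w -> inDelta B (phi4 l1 l2 w) /\ inDelta B (phi4 m1 m2 w)].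

(* type (3b): e^λ and e^μ are real *)
Definition type3b (l1 l2 m1 m2 : R) : Prop := sin l2 = 0 /\ sin m2 = 0.

Definition inGamma (l1 l2 m1 m2 : R) (B : 'M[R]_4) (g : pt) : Prop :=
  inLambda l1 l2 m1 m2 (co g 0) (co g 1) /\
  inDelta B (\row_(k < 4) co g k.+2).

Definition e_ (j : 'I_6) : pt := delta_mx 0 j.
Fixpoint iter_dd (vs : seq pt) (f : pt -> R) : pt -> R :=
  match vs with
  | [::] => f
  | v :: vs' => fun x => 'D_v (iter_dd vs' f) x
  end.
Definition smooth (f : pt -> R) : Prop :=
  forall (vs : seq pt) (x : pt), differentiable (iter_dd vs f) x.
Definition pd (l : 'I_6) (f : pt -> R) : pt -> R := iter_dd [:: e_ l] f.

Definition Jac (f : pt -> pt) (x : pt) : 'M[R]_6 :=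
  \matrix_(k, j) pd j (fun y => f y ord0 k) x.

(* almost complex structures J : G -> M_6(R), J(x) acting on column vectors *)
Definition entry (J : pt -> 'M[R]_6) (i j : 'I_6) : pt -> R := fun x => J x i j.

Definition smooth_field (J : pt -> 'M[R]_6) : Prop :=
  forall i j, smooth (entry J i j).
Definition almost_complex (J : pt -> 'M[R]_6) : Prop :=
  forall x, J x *m J x = - 1%:M.
(* vanishing of the Nijenhuis tensor, in coordinates:
   N^k_{ij} = J^l_i d_l J^k_j - J^l_j d_l J^k_i - J^k_l (d_i J^l_j - d_j J^l_i) *)
Definition integrable (J : pt -> 'M[R]_6) : Prop :=
  forall (i j k : 'I_6) (x : pt),
    \sum_(l < 6) (J x l i * pd l (entry J k j) x - J x l j * pd l (entry J k i) x
                 - J x k l * (pd i (entry J l j) x - pd j (entry J l i) x)) = 0.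

Definition invariant_under (J : pt -> 'M[R]_6) (h : pt) : Prop :=
  forall g, J (gmul h g) *m Jac (gmul h) g = Jac (gmul h) g *m J g.

(* a complex structure on the smooth manifold Γ\G = a smooth, integrable,
   Γ-invariant almost complex structure on G *)
Definition complex_structure_on_quotient (Gam : pt -> Prop) (J : pt -> 'M[R]_6) :=
  [/\ smooth_field J, almost_complex J, integrable J &
      forall h, Gam h -> invariant_under J h].

Definition left_invariant (J : pt -> 'M[R]_6) : Prop :=
  forall h, invariant_under J h.

(* the complex structure of M = Γ\G induced by the complex structure of G = C^3 *)
Definition J0 : pt -> 'M[R]_6 := fun _ =>
  \matrix_(k, j)
    (if ~~ odd k && (j == k.+1 :> nat) then -1
     else if odd k && (k == j.+1 :> nat) then 1 else 0).

End Solv.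

From Pilot Require Import Defs.
From HB Require Import structures.
From mathcomp Require Import all_boot all_order all_algebra.
From mathcomp Require Import all_classical all_reals all_analysis.
From mathcomp Require Import ring lra.
Set Implicit Arguments. Unset Strict Implicit. Unset Printing Implicit Defensive.
Import Order.TTheory GRing.Theory Num.Theory.
Import numFieldNormedType.Exports.
Local Open Scope ring_scope.

(* Take lambda = i pi and mu = log a with a = (3 + sqrt 5) / 2, so that
   phi(lambda) = -1 and phi(mu) = diag(a, a^-1); both preserve a lattice of C^2
   built from Z[a].  Since e^lambda and e^mu are real, left translation by an
   element of Gamma has as differential a real scaling of the y-line and of the
   z-line, so any constant almost complex structure preserving the x-, y- and
   z-planes descends to Gamma\G, and is integrable because it is constant.
   Shearing the standard structure on the y-plane gives such a family J_t; but
   translation by x = i pi / 2 rotates the y-plane by a quarter turn, which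
   commutes with J_t only for t = 0. *)

Section ConstantFields.
Variable R : realType.

Lemma derive_along_affine (f : pt R -> R) (a v : pt R) (c : R) :
  (forall h : R, f (h *: v + a) = f a + h * c) -> 'D_v f a = c.
Proof.
move=> f_affine; apply: cvg_lim => //.
apply: cvg_near_cst; near=> h.
have h_neq0 : h != 0 by near: h; exact: nbhs_dnbhs_neq.
rewrite /= /shift f_affine addrC addKr.
by rewrite -[RHS]mul1r -(mulVf h_neq0) -mulrA.
Unshelve. all: by end_near.
Qed.

Lemma iter_dd_cst (vs : seq (pt R)) (c : R) :
  iter_dd vs (fun _ => c) = fun _ => if vs is [::] then c else 0.
Proof.
elim: vs => [//|v vs IH] /=; apply: funext => x.
by apply: derive_along_affine => h; rewrite IH mulr0 addr0.
Qed.

Lemma smooth_cst (c : R) : smooth (fun _ : pt R => c).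
Proof. by move=> vs x; rewrite iter_dd_cst; exact: differentiable_cst. Qed.

Lemma smooth_field_cst (M : 'M[R]_6) : smooth_field (fun _ : pt R => M).
Proof. by move=> i j; exact: smooth_cst. Qed.

Lemma integrable_cst (M : 'M[R]_6) : Defs.integrable (fun _ : pt R => M).
Proof.
move=> i j k x; apply: big1 => l _.
by rewrite /pd /entry !iter_dd_cst /= subrr !mulr0 !subrr.
Qed.

Lemma co_shift (y : pt R) (s : R) (j : 'I_6) (i : nat) : (i < 6)%N ->
  co (s *: e_ R j + y) i = co y i + s * (i == j)%:R.
Proof.
move=> i_lt6; rewrite /co /e_ !mxE eqxx /= addrC.
by have -> : (inord i == j) = (i == j) by rewrite -val_eqE /= inordK.
Qed.

(* Multiplication by e on y and by f on z, complex numbers being pairs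
   (real part, imaginary part). *)
Definition transl_mx (e f : R * R) : 'M[R]_6 :=
  \matrix_(k, j)
    match k : nat with
    | 0 | 1 => (k == j :> nat)%:R
    | 2 => e.1 * (j == 2 :> nat)%:R - e.2 * (j == 3 :> nat)%:R
    | 3 => e.1 * (j == 3 :> nat)%:R + e.2 * (j == 2 :> nat)%:R
    | 4 => f.1 * (j == 4 :> nat)%:R - f.2 * (j == 5 :> nat)%:R
    | _ => f.1 * (j == 5 :> nat)%:R + f.2 * (j == 4 :> nat)%:R
    end.

Lemma Jac_gmul (h g : pt R) :
  Jac (gmul h) g = transl_mx (cexp (co h 0) (co h 1)) (cexp (- co h 0) (- co h 1)).
Proof.
apply/matrixP => k j; rewrite !mxE /pd; apply: derive_along_affine => s.
rewrite !mxE; case: k => [[|[|[|[|[|[|k]]]]]] k_lt6] //=; rewrite !co_shift //.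
all: by case: j => [[|[|[|[|[|[|j]]]]]] ?] //=; ring.
Qed.

Lemma invariant_under_cst (M : 'M[R]_6) (h : pt R) :
  let D := transl_mx (cexp (co h 0) (co h 1)) (cexp (- co h 0) (- co h 1)) in
  invariant_under (fun _ => M) h <-> M *m D = D *m M.
Proof. by split=> [/(_ 0)|MD g]; rewrite Jac_gmul. Qed.

End ConstantFields.

Section ShearedStructure.
Variable R : realType.

(* On the y-plane, the conjugate of the standard structure by the shear
   (u, v) |-> (u, t u + v). *)
Definition jshear (t : R) (k j : nat) : R :=
  match k, j with
  | 0, 1 | 2, 3 | 4, 5 => -1
  | 1, 0 | 5, 4 => 1
  | 2, 2 => t
  | 3, 2 => 1 + t ^+ 2
  | 3, 3 => - t
  | _, _ => 0
  end.

Definition Jshear (t : R) : 'M[R]_6 := \matrix_(k, j) jshear t k j.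

Lemma Jshear0 : (fun _ => Jshear 0) = J0 (R:=R).
Proof.
apply: funext => x; apply/matrixP => k j; rewrite !mxE.
by case: k => [[|[|[|[|[|[|k]]]]]] ?] //; case: j => [[|[|[|[|[|[|j]]]]]] ?] //=;
  ring.
Qed.

Lemma Jshear_sqr (t : R) : Jshear t *m Jshear t = - 1%:M.
Proof.
apply/matrixP => k j; rewrite !mxE !big_ord_recl !big_ord0 !mxE.
by case: k => [[|[|[|[|[|[|k]]]]]] ?] //; case: j => [[|[|[|[|[|[|j]]]]]] ?] //=;
  ring.
Qed.

Lemma Jshear_transl_real (t e f : R) :
  Jshear t *m transl_mx (e, 0) (f, 0) = transl_mx (e, 0) (f, 0) *m Jshear t.
Proof.
apply/matrixP => k j; rewrite !mxE !big_ord_recl !big_ord0 !mxE.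
by case: k => [[|[|[|[|[|[|k]]]]]] ?] //; case: j => [[|[|[|[|[|[|j]]]]]] ?] //=;
  ring.
Qed.

Lemma Jshear_transl_comm_im (t : R) (e f : R * R) :
  Jshear t *m transl_mx e f = transl_mx e f *m Jshear t -> e.2 * t ^+ 2 = 0.
Proof.
move=> /matrixP /(_ (inord 2) (inord 2)).
rewrite !mxE !big_ord_recl !big_ord0 !mxE /= !inordK //= => comm.
lra.
Qed.

Definition jshear_poly (k j : nat) : {poly R} :=
  match k, j with
  | 0, 1 | 2, 3 | 4, 5 => -1
  | 1, 0 | 5, 4 => 1
  | 2, 2 => 'X
  | 3, 2 => 1 + 'X ^+ 2
  | 3, 3 => - 'X
  | _, _ => 0
  end.

Lemma jshear_horner (t : R) (k j : nat) : jshear t k j = (jshear_poly k j).[t].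
Proof.
by case: k => [|[|[|[|[|[|k]]]]]]; case: j => [|[|[|[|[|[|j]]]]]];
  rewrite /= ?hornerE.
Qed.

Lemma Jshear_entry_continuous (vs : seq (pt R)) (i j : 'I_6) (p : R * pt R) :
  {for p, continuous (fun q : R * pt R =>
                        iter_dd vs (entry (fun _ => Jshear q.1) i j) q.2)}.
Proof.
have -> : (fun q : R * pt R => iter_dd vs (entry (fun _ => Jshear q.1) i j) q.2)
          = fun q => if vs is [::] then (jshear_poly i j).[q.1] else 0.
  by apply: funext => q; rewrite /entry iter_dd_cst mxE jshear_horner.
case: vs => [|v vs]; last exact: cst_continuous.
apply: (@continuous_comp _ _ _ fst (horner (jshear_poly i j))).
  exact: cvg_fst.
exact: continuous_horner.
Qed.

Lemma sin_int_mulpi (p : int) : sin (p%:~R * pi) = 0 :> R.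
Proof.
have sin_nat_mulpi (n : nat) : sin (n%:R * pi) = 0 :> R.
  by rewrite mulr_natl -[_ *+ n]add0r alternatingn ?sin0 ?mulr0 //; exact: sinDpi.
case: p => n; first exact: sin_nat_mulpi.
by rewrite NegzE intrN mulNr sinN sin_nat_mulpi oppr0.
Qed.

Lemma Jshear_invariant_inGamma (t a : R) (B : 'M[R]_4) (h : pt R) :
  inGamma 0 pi (ln a) 0 B h -> invariant_under (fun _ => Jshear t) h.
Proof.
case=> -[p [q [_ h1]]] _; apply/invariant_under_cst.
have sin_h1 : sin (co h 1) = 0 by rewrite h1 mulr0 addr0 sin_int_mulpi.
by rewrite /cexp sinN sin_h1 oppr0 !mulr0; exact: Jshear_transl_real.
Qed.

Lemma Jshear_not_left_invariant (t : R) :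
  t != 0 -> ~ left_invariant (fun _ => Jshear t).
Proof.
move=> t_neq0 /(_ (\row_k if k == 1 :> nat then pi / 2 else 0)) /invariant_under_cst.
rewrite /co !mxE !inordK //= => /Jshear_transl_comm_im /=.
by rewrite expR0 sin_pihalf !mul1r => /eqP; rewrite sqrf_eq0; exact/negP.
Qed.

End ShearedStructure.

Section Lattice.
Variable R : realType.

Lemma phi4_ipi (w : 'rV[R]_4) : phi4 0 pi w = - w.
Proof.
apply/rowP => k; rewrite !mxE /cexp oppr0 expR0 cosN sinN cospi sinpi oppr0.
rewrite -[in RHS](inord_val k).
by case: k => [[|[|[|[|k]]]] ?] //=; ring.
Qed.

Lemma phi4_ln (a : R) (w : 'rV[R]_4) : 0 < a ->
  phi4 (ln a) 0 w = w *m diag_mx (\row_k if (k < 2)%N then a else a^-1).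
Proof.
move=> a_gt0; rewrite mul_mx_diag.
apply/rowP => k; rewrite !mxE /cexp oppr0 cos0 sin0 expRN lnK ?posrE //.
rewrite -[in RHS](inord_val k).
by case: k => [[|[|[|[|k]]]] ?] //=; rewrite inordK //=; ring.
Qed.

Lemma inDelta_opp (B : 'M[R]_4) (w : 'rV[R]_4) : inDelta B w -> inDelta B (- w).
Proof. by case=> n ->; exists (- n); rewrite map_mxN mulNmx. Qed.

Lemma inDelta_mulmx (B A : 'M[R]_4) (M : 'M[int]_4) (w : 'rV[R]_4) :
  B *m A = map_mx intr M *m B -> inDelta B w -> inDelta B (w *m A).
Proof. by move=> BA [n ->]; exists (n *m M); rewrite map_mxM -!mulmxA BA. Qed.

(* For a + a^-1 an integer, the rows span {(u + i v, u' + i v') : u, v in Z[a]},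
   where ' is the conjugation of Z[a] exchanging a and a^-1. *)
Definition conj_basis (a : R) : 'M[R]_4 :=
  \matrix_(i, j)
    match i : nat, j : nat with
    | 0, 0 | 0, 2 | 2, 1 | 2, 3 => 1
    | 1, 0 | 3, 1 => a
    | 1, 2 | 3, 3 => a^-1
    | _, _ => 0
    end.

Definition conj_basis_inv (a : R) : 'M[R]_4 :=
  let d := (a^-1 - a)^-1 in
  \matrix_(i, j)
    match i : nat, j : nat with
    | 0, 0 | 1, 2 => a^-1 * d
    | 0, 1 | 1, 3 => - d
    | 2, 0 | 3, 2 => - a * d
    | 2, 1 | 3, 3 => d
    | _, _ => 0
    end.

Lemma conj_basis_unit (a : R) : a^-1 != a -> conj_basis a \in unitmx.
Proof.
move=> a_conj; suff : conj_basis a *m conj_basis_inv a = 1%:M by case/mulmx1_unit.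
have d_inv : (a^-1 - a) * (a^-1 - a)^-1 = 1 by rewrite mulfV // subr_eq0.
apply/matrixP => i j; rewrite !mxE !big_ord_recl big_ord0 !mxE.
by case: i => [[|[|[|[|i]]]] ?] //; case: j => [[|[|[|[|j]]]] ?] //=; lra.
Qed.

Definition companion_int (s : int) : 'M[int]_4 :=
  \matrix_(i, j)
    match i : nat, j : nat with
    | 0, 1 | 2, 3 => 1
    | 1, 0 | 3, 2 => -1
    | 1, 1 | 3, 3 => s
    | _, _ => 0
    end.

Lemma conj_basis_scale (a : R) (s : int) : a != 0 -> a + a^-1 = s%:~R ->
  conj_basis a *m diag_mx (\row_k if (k < 2)%N then a else a^-1) =
  map_mx intr (companion_int s) *m conj_basis a.
Proof.
move=> a_neq0 a_trace; have a_inv : a * a^-1 = 1 by rewrite mulfV.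
apply/matrixP => i j; rewrite mul_mx_diag !mxE !big_ord_recl big_ord0 !mxE.
by case: i => [[|[|[|[|i]]]] ?] //; case: j => [[|[|[|[|j]]]] ?] //=;
  rewrite -?a_trace; lra.
Qed.

Lemma lattice_data_conj_basis (a : R) (s : int) : 1 < a -> a + a^-1 = s%:~R ->
  lattice_data 0 pi (ln a) 0 (conj_basis a).
Proof.
move=> a_gt1 a_trace; have a_gt0 : 0 < a by apply: lt_trans a_gt1.
split.
- by rewrite mul0r sub0r oppr_eq0 mulf_neq0 // gt_eqF ?pi_gt0 ?ln_gt0.
- by apply: conj_basis_unit; rewrite lt_eqF // (lt_trans _ a_gt1) // invf_lt1.
- move=> w Dw; split; first by rewrite phi4_ipi; exact: inDelta_opp.
  rewrite phi4_ln //; apply: inDelta_mulmx Dw.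
  by apply: conj_basis_scale a_trace; rewrite gt_eqF.
Qed.

Definition golden_sq : R := (3 + Num.sqrt 5) / 2.

Lemma golden_sq_gt1 : 1 < golden_sq.
Proof. by have := sqrtr_ge0 (5 : R); rewrite /golden_sq; lra. Qed.

Lemma golden_sq_trace : golden_sq + golden_sq^-1 = 3%:~R.
Proof.
have sqrt5 : Num.sqrt (5 : R) ^+ 2 = 5 by rewrite sqr_sqrtr.
have golden_sq_inv : golden_sq * (3 - golden_sq) = 1 by rewrite /golden_sq; lra.
have golden_sq_neq0 : golden_sq != 0 by rewrite gt_eqF // (lt_trans _ golden_sq_gt1).
have -> : golden_sq^-1 = 3 - golden_sq.
  by apply: (mulfI golden_sq_neq0); rewrite mulfV.
by rewrite subrKC.
Qed.

End Lattice.

From mathcomp Require Import Rstruct Rstruct_topology.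

Theorem theorem4 :
  exists (l1 l2 m1 m2 : Rdefinitions.R) (B : 'M[Rdefinitions.R]_4),
    lattice_data l1 l2 m1 m2 B /\ type3b l1 l2 m1 m2 /\
    exists (eps : Rdefinitions.R) (J : Rdefinitions.R -> pt Rdefinitions.R -> 'M[Rdefinitions.R]_6),
      [/\ 0 < eps,
          (forall t, `|t| < eps ->
             complex_structure_on_quotient (inGamma l1 l2 m1 m2 B) (J t)),
          J 0 = J0 (R:=Rdefinitions.R),
          (forall (vs : seq (pt Rdefinitions.R)) (i j : 'I_6)
                  (p : Rdefinitions.R * pt Rdefinitions.R),
             `|p.1| < eps ->
             {for p, continuous (fun q : Rdefinitions.R * pt Rdefinitions.R =>
                                   iter_dd vs (entry (J q.1) i j) q.2)}) &
          (forall t, 0 < `|t| < eps -> ~ left_invariant (J t))].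
Proof.
pose a : Rdefinitions.R := golden_sq _.
exists 0, pi, (ln a), 0, (conj_basis a); split.
  exact: lattice_data_conj_basis (golden_sq_gt1 _) (golden_sq_trace _).
split; first by rewrite /type3b sinpi sin0.
exists 1, (fun t _ => Jshear t); split => //.
- move=> t _; split.
  + exact: smooth_field_cst.
  + by move=> x; exact: Jshear_sqr.
  + exact: integrable_cst.
  + by move=> h; exact: Jshear_invariant_inGamma.
- exact: Jshear0.
- by move=> vs i j p _; exact: Jshear_entry_continuous.
- by move=> t /andP[t_gt0 _]; apply: Jshear_not_left_invariant; rewrite -normr_gt0.
Qed.
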